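(* Let $d,w \ge 1$ be integers and let $h_1,\dots,h_d$ be fixed functions from the item universe $\mathcal{U}$ to $\{1,\dots,w\}$. Let $\sigma_1$ and $\sigma_2$ be two finite streams of occurrences of items of $\mathcal{U}$, each occurrence carrying a positive real (decayed) weight, and let $\sigma=\sigma_1\sigma_2$ be their concatenation. For a stream $\tau$ and a cell $(i,j)$ with $1\le i\le d$, $1\le j\le w$, let $\tau^{(i,j)}$ be the sub-stream of occurrences of items $e$ with $h_i(e)=j$, let $f_{\tau^{(i,j)}}(e)$ be the sum of the weights of the occurrences of $e$ in $\tau^{(i,j)}$, and let $|\tau^{(i,j)}|=\sum_e f_{\tau^{(i,j)}}(e)$ be its total decayed count. Call a two-counter summary $\mathcal{S}=(\Sigma,\hat f_{\mathcal{S}})$ (a set $\Sigma$ of at most $2$ monitored items with estimates $\hat f_{\mathcal{S}}(e)>0$, $e\in\Sigma$; let $\hat f^{min}_{\mathcal{S}}=\min_{e\in\Sigma}\hat f_{\mathcal{S}}(e)$ if $|\Sigma|=2$ and $\hat f^{min}_{\mathcal{S}}=0$ if $|\Sigma|<2$; let $|\mathcal{S}|=\sum_{e\in\Sigma}\hat f_{\mathcal{S}}(e)$) \emph{valid} for a weighted stream $\tau$ with decayed frequencies $f_\tau$ if: (i) $|\mathcal{S}|=|\tau|$; (ii) $\hat f_{\mathcal{S}}(e)-\hat f^{min}_{\mathcal{S}}\le f_\tau(e)\le \hat f_{\mathcal{S}}(e)$ for every $e\in\Sigma$; (iii) $f_\tau(e)\le \hat f^{min}_{\mathcal{S}}$ for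 every item $e\notin\Sigma$; (iv) $\hat f^{min}_{\mathcal{S}}\le |\tau|/2$. Suppose $D_1$ and $D_2$ are $d\times w$ sketches such that, for every cell $(i,j)$, $D_1[i][j]=\mathcal{S}_1=(\Sigma_1,\hat f_{\mathcal{S}_1})$ is a two-counter summary valid for $\sigma_1^{(i,j)}$ and $D_2[i][j]=\mathcal{S}_2=(\Sigma_2,\hat f_{\mathcal{S}_2})$ is a two-counter summary valid for $\sigma_2^{(i,j)}$. Define the merged sketch $G$ cell by cell as follows: form the combined summary $\mathcal{S}_C$ on $\Sigma_C=\Sigma_1\cup\Sigma_2$ by $\hat f_{\mathcal{S}_C}(e)=\hat f_{\mathcal{S}_1}(e)+\hat f_{\mathcal{S}_2}(e)$ for $e\in\Sigma_1\cap\Sigma_2$, $\hat f_{\mathcal{S}_C}(e)=\hat f_{\mathcal{S}_1}(e)+\hat f^{min}_{\mathcal{S}_2}$ for $e\in\Sigma_1\setminus\Sigma_2$, $\hat f_{\mathcal{S}_C}(e)=\hat f_{\mathcal{S}_2}(e)+\hat f^{min}_{\mathcal{S}_1}$ for $e\in\Sigma_2\setminus\Sigma_1$; then, if $|\Sigma_C|>2$, let $G[i][j]=\mathcal{S}_M$ retain only the $2$ items of $\Sigma_C$ with the greatest values of $\hat f_{\mathcal{S}_C}$ (with those values), and otherwise let $G[i][j]=\mathcal{S}_M=\mathcal{S}_C$. Then for every cell $(i,j)$, the merged summary $G[i][j]$ is a two-counter summary valid for $\sigma^{(i,j)}$; in particular the sum of its counters equals the total decayed count $|\sigma^{(i,j)}|=|\sigma_1^{(i,j)}|+|\sigma_2^{(i,j)}|$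 of the items of $\sigma$ mapped to that cell.
   Context: This is the merge operation of PFDCMSS, a parallel algorithm for time-faded heavy hitters. Each stream occurrence of an item $v$ with timestamp $t_v$ carries a (non-normalized forward) decayed weight $g(t_v-L)$ for a positive monotone non-decreasing function $g$ and landmark time $L$; only positivity of the weights matters here. An FDCMSS sketch is a $d\times w$ array, each cell of which holds a Space Saving summary with exactly two counters (a counter with value $0$ monitors no item), maintaining the items mapped to that cell by the row hash function $h_i$. Property (i) (''1-norm equivalence'') says the counters in a cell sum to the same value a Count--Min sketch counter for that cell would hold. *)

From HB Require Import structures.
From mathcomp Require Import all_boot all_order all_algebra.
Set Implicit Arguments. Unset Strict Implicit. Unset Printing Implicit Defensive.
Import Order.TTheory GRing.Theory Num.Theory.
Local Open Scope ring_scope.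

Section Defs.
Variables (U : eqType) (R : realFieldType).

Definition stream := seq (U * R).

Definition pos_weights (tau : stream) : bool := all (fun p => 0 < p.2) tau.

Definition freq (tau : stream) (e : U) : R := \sum_(p <- tau | p.1 == e) p.2.

(* total decayed count |tau| = sum_e f_tau(e) = sum of all weights *)
Definition tot (tau : stream) : R := \sum_(p <- tau) p.2.

Definition substream (d w : nat) (h : 'I_d -> U -> 'I_w)
  (tau : stream) (i : 'I_d) (j : 'I_w) : stream :=
  [seq p <- tau | h i p.1 == j].

(* A summary: the list of monitored items Sigma and the estimate function
   (only its values on Sigma are meaningful). *)
Record summary := Summary { items : seq U; est : U -> R }.

Definition two_counter (S : summary) : Prop :=
  [/\ uniq (items S), (size (items S) <= 2)%N & forall e, e \in items S -> 0 < est S e].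

Definition fmin (S : summary) : R :=
  if items S is [:: a; b] then Num.min (est S a) (est S b) else 0.

Definition ssum (S : summary) : R := \sum_(e <- items S) est S e.

Definition valid (S : summary) (tau : stream) : Prop :=
  [/\ ssum S = tot tau,
      (forall e, e \in items S -> est S e - fmin S <= freq tau e <= est S e),
      (forall e, e \notin items S -> freq tau e <= fmin S)
    & fmin S <= tot tau / 2].

Definition comb_items (S1 S2 : summary) : seq U := undup (items S1 ++ items S2).

Definition comb_est (S1 S2 : summary) (e : U) : R :=
  if (e \in items S1) && (e \in items S2) then est S1 e + est S2 e
  else if e \in items S1 then est S1 e + fmin S2
  else est S2 e + fmin S1.

(* SM is a merge of S1 and S2: if |Sigma_C| > 2, SM retains 2 items of Sigma_C
   with the greatest combined values (any tie-breaking), otherwise SM = S_C.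
   Estimates are the combined ones. *)
Definition merged (S1 S2 SM : summary) : Prop :=
  (forall e, est SM e = comb_est S1 S2 e) /\
  (if (2 < size (comb_items S1 S2))%N then
     [/\ uniq (items SM), size (items SM) = 2%N,
         {subset items SM <= comb_items S1 S2} &
         forall x y, x \in items SM -> y \in comb_items S1 S2 -> y \notin items SM ->
           comb_est S1 S2 y <= comb_est S1 S2 x]
   else items SM = comb_items S1 S2).

End Defs.

From mathcomp Require Import all_boot all_order all_algebra.
From mathcomp Require Import lra.
Set Implicit Arguments. Unset Strict Implicit. Unset Printing Implicit Defensive.
Import Order.TTheory GRing.Theory Num.Theory.
Local Open Scope ring_scope.

(* Let [estimate S e] be the Space-Saving estimate of [e] in [S]: its counter if
   [e] is monitored, [fmin S] otherwise.  Validity of [S] for [t] amounts to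
   [estimate S e - fmin S <= freq t e <= estimate S e] for every item, and on the
   combined items the merged counter is [estimate S1 e + estimate S2 e].  Every
   merged counter is at least [fmin S1 + fmin S2] and every discarded one is at
   most the retained ones, so the frequency bounds pass to the merge.
   For the 1-norm: in a two-counter summary the estimates of two distinct items
   sum to at most [ssum S], with equality when one of them carries the largest
   counter.  Hence no pair of combined counters exceeds [ssum S1 + ssum S2], some
   pair attains it, and so do the two largest ones. *)

Lemma le_top_pair (T : eqType) (R : realDomainType) (F : T -> R) (C : seq T) x y u v :
  u != v -> u \in C -> v \in C ->
  (forall a b, a \in [:: x; y] -> b \in C -> b \notin [:: x; y] -> F b <= F a) ->
  F u + F v <= F x + F y.
Proof.
move=> uv uC vC top.
have dom b : b \in C -> b \notin [:: x; y] -> F b <= F x /\ F b <= F y.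
  by move=> bC bxy; split; apply: top => //; rewrite !inE eqxx ?orbT.
case: (boolP (u \in [:: x; y])) => [|/(dom u uC) [? ?]];
  case: (boolP (v \in [:: x; y])) => [|/(dom v vC) [? ?]]; rewrite ?mem_seq2.
- case/orP=> /eqP ? /orP[]/eqP ?; subst; first [by rewrite eqxx in uv | lra].
- by case/orP=> /eqP->; lra.
- by case/orP=> /eqP->; lra.
- lra.
Qed.

Section TwoCounter.
Variables (U : eqType) (R : realFieldType).
Implicit Types (S : summary U R) (t : stream U R).

Definition estimate S (e : U) : R := if e \in items S then est S e else fmin S.

Lemma fmin_eq0 S : (size (items S) < 2)%N -> fmin S = 0.
Proof. by case: S => [[|a [|b s]] f]. Qed.

Lemma le_fmin S m : (size (items S) <= 2)%N ->
  {in items S, forall e, m <= est S e} -> ((size (items S) < 2)%N -> m <= 0) ->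
  m <= fmin S.
Proof.
case: S => [[|a [|b [|c s]]] f] //= _ le_m small; rewrite ?small //.
by rewrite /fmin /= le_min !le_m ?mem_head ?mem_seq2 ?eqxx ?orbT.
Qed.

Lemma fmin_le_est S e : two_counter S -> e \in items S -> fmin S <= est S e.
Proof.
case: S => [[|a [|b [|c s]]] f] [_ //= _ pos] ein; rewrite /fmin /=.
- exact/ltW/pos.
- by move: ein; rewrite mem_seq2 => /orP[]/eqP->; rewrite ge_min lexx ?orbT.
Qed.

Lemma fmin_ge0 S : two_counter S -> 0 <= fmin S.
Proof. by case=> _ le2 pos; apply: le_fmin => // e /pos/ltW. Qed.

Lemma fmin_le_half S : two_counter S -> fmin S <= ssum S / 2.
Proof.
case: S => [[|a [|b [|c s]]] f] [_ //= _ pos]; rewrite /fmin /ssum /= ?big_cons big_nil.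
- lra.
- by move: (pos a (mem_head _ _)) => /= ?; lra.
- by case: (leP (f a) (f b)); lra.
Qed.

Lemma fmin_le_estimate S e : two_counter S -> fmin S <= estimate S e.
Proof. by rewrite /estimate; case: ifP => // ein /fmin_le_est->. Qed.

Lemma estimate_ge0 S e : two_counter S -> 0 <= estimate S e.
Proof. by move=> tc; rewrite (le_trans (fmin_ge0 tc)) ?fmin_le_estimate. Qed.

Lemma estimate_gt0 S e : two_counter S -> e \in items S -> 0 < estimate S e.
Proof. by case=> _ _ pos eS; rewrite /estimate eS pos. Qed.

Lemma estimate_pair_le_ssum S x y : two_counter S -> x != y ->
  estimate S x + estimate S y <= ssum S.
Proof.
case: S => [[|a [|b [|c s]]] f] [_ //= _ pos] xy;
  rewrite /estimate /fmin /ssum /= ?big_cons big_nil ?inE ?orbF.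
- lra.
- move: (pos a (mem_head _ _)) => /= pa.
  do ![case: eqP => [?|?]; subst => //=]; first [by rewrite eqxx in xy | lra].
- move: (pos a (mem_head _ _)) (pos b (mem_last a [:: b])) => /= pa pb.
  do ![case: eqP => [?|?]; subst => //=];
    first [by rewrite eqxx in xy | by case: (leP (f a) (f b)) => ?; lra].
Qed.

Lemma estimate_argmax S z : two_counter S ->
  exists2 a, a \in z :: items S &
    forall y, y != a -> estimate S a + estimate S y = ssum S.
Proof.
case: S => [[|a [|b [|c s]]] f] [_ //= _ _].
- exists z; rewrite ?mem_head // => y _.
  by rewrite /estimate /fmin /ssum big_nil addr0.
- exists a; rewrite ?inE ?eqxx ?orbT // => y ya.
  by rewrite /estimate /fmin /ssum /= big_cons big_nil !inE eqxx (negbTE ya).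
- case: (leP (f b) (f a)) => fab; [exists a | exists b];
    rewrite ?inE ?eqxx ?orbT // => y ya;
    rewrite /estimate /fmin /ssum /= !big_cons big_nil !inE ?eqxx ?orbT /=.
  + rewrite (negbTE ya) (min_r fab) /=; case: eqP => [->|_]; lra.
  + rewrite (negbTE ya) orbF (min_l (ltW fab)); case: eqP => [->|_]; lra.
Qed.

Lemma sum_estimate S (C : seq U) : two_counter S -> uniq C -> (size C <= 2)%N ->
  {subset items S <= C} -> \sum_(e <- C) estimate S e = ssum S.
Proof.
move=> [uqS _ _] uqC leC2 sub.
have -> : \sum_(e <- C) estimate S e = \sum_(e <- C | e \in items S) est S e.
  rewrite [RHS]big_mkcond; apply: eq_big_seq => e eC; rewrite /estimate.
  case: ifP => // eN; apply: fmin_eq0; rewrite ltnNge; apply: contraFN eN => two.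
  by have [_ ->] := uniq_min_size uqS sub (leq_trans leC2 two).
rewrite -big_filter; apply: perm_big; apply: uniq_perm; rewrite ?filter_uniq // => e.
by rewrite mem_filter; case: (boolP (e \in items S)) => // /sub.
Qed.

Lemma valid_estimate S t e : pos_weights t -> valid S t ->
  estimate S e - fmin S <= freq t e <= estimate S e.
Proof.
move=> /allP pos [_ inS outS _]; rewrite /estimate; case: ifP => [/inS //|/negbT eN].
rewrite subrr outS // andbT /freq big_seq_cond; apply: sumr_ge0 => p /andP[/pos ? _].
exact: ltW.
Qed.

Lemma pos_weights_filter (P : pred (U * R)) t :
  pos_weights t -> pos_weights (filter P t).
Proof. by move=> /allP pos; apply/allP => p /[!mem_filter] /andP[_ /pos]. Qed.

Lemma mem_comb_items S1 S2 e :
  (e \in comb_items S1 S2) = (e \in items S1) || (e \in items S2).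
Proof. by rewrite mem_undup mem_cat. Qed.

Lemma comb_estE S1 S2 e : e \in comb_items S1 S2 ->
  comb_est S1 S2 e = estimate S1 e + estimate S2 e.
Proof.
rewrite mem_comb_items /comb_est /estimate.
by case: (e \in items S1); case: (e \in items S2) => //=; rewrite addrC.
Qed.

Lemma comb_est_gt0 S1 S2 e : two_counter S1 -> two_counter S2 ->
  e \in comb_items S1 S2 -> 0 < comb_est S1 S2 e.
Proof.
move=> tc1 tc2; rewrite mem_comb_items => /orP[] eS;
  rewrite comb_estE ?mem_comb_items ?eS ?orbT //.
  exact: ltr_wpDr (estimate_ge0 _ tc2) (estimate_gt0 tc1 eS).
exact: ltr_wpDl (estimate_ge0 _ tc1) (estimate_gt0 tc2 eS).
Qed.

Lemma comb_items_uniq S1 S2 : uniq (comb_items S1 S2).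
Proof. exact: undup_uniq. Qed.

Lemma sub_comb_itemsl S1 S2 : {subset items S1 <= comb_items S1 S2}.
Proof. by move=> e eS; rewrite mem_comb_items eS. Qed.

Lemma sub_comb_itemsr S1 S2 : {subset items S2 <= comb_items S1 S2}.
Proof. by move=> e eS; rewrite mem_comb_items eS orbT. Qed.

Lemma exists_tight_pair S1 S2 : two_counter S1 -> two_counter S2 ->
  (1 < size (comb_items S1 S2))%N ->
  exists u v, [/\ u != v, u \in comb_items S1 S2, v \in comb_items S1 S2,
    estimate S1 u + estimate S1 v = ssum S1 & estimate S2 u + estimate S2 v = ssum S2].
Proof.
move=> tc1 tc2 szC.
have [z [z' [zz' zC z'C]]] :
    exists z z', [/\ z != z', z \in comb_items S1 S2 & z' \in comb_items S1 S2].
  move: (comb_items_uniq S1 S2) szC.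
  case: (comb_items S1 S2) => [|z [|z' s]] //= /andP[] /[!inE] /norP[zz' _] _ _.
  by exists z, z'; rewrite !inE !eqxx ?orbT.
have inC S a : {subset items S <= comb_items S1 S2} -> a \in z :: items S ->
    a \in comb_items S1 S2.
  by move=> sub; rewrite in_cons => /predU1P[->|/sub].
have [a1 /(inC _ _ (@sub_comb_itemsl S1 S2)) a1C tight1] := estimate_argmax z tc1.
have [a2 /(inC _ _ (@sub_comb_itemsr S1 S2)) a2C tight2] := estimate_argmax z tc2.
have [e12 | a12] := eqVneq a1 a2; first subst a2.
  pose y := if a1 == z then z' else z.
  have ya1 : y != a1 by rewrite /y; case: ifP => [/eqP->|/negbT az]; rewrite eq_sym.
  exists a1, y; split; rewrite 1?eq_sym ?tight1 ?tight2 //.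
  by rewrite /y; case: ifP.
exists a1, a2; split => //; first by rewrite tight1 // eq_sym.
by rewrite addrC tight2.
Qed.

Section Merge.
Variables S1 S2 SM : summary U R.
Hypotheses (tc1 : two_counter S1) (tc2 : two_counter S2) (mSM : merged S1 S2 SM).
Local Notation C := (comb_items S1 S2).

Lemma merged_small : (size C <= 2)%N -> items SM = C.
Proof. by case: mSM => _; rewrite ltnNge => /[swap] ->. Qed.

Lemma merged_large : (2 < size C)%N ->
  exists x y, [/\ items SM = [:: x; y], x != y &
    forall a b, a \in items SM -> b \in C -> b \notin items SM ->
      comb_est S1 S2 b <= comb_est S1 S2 a].
Proof.
case: mSM => _ /[swap] -> [].
case: (items SM) => [|x [|y [|? ?]]] //= /andP[] /[!inE] xy _ _ _ top.
by exists x, y.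
Qed.

Lemma merged_subset : {subset items SM <= C}.
Proof.
case: (leqP (size C) 2) => [/merged_small -> //|].
by case: mSM => _ /[swap] -> [].
Qed.

Lemma est_merged e : e \in items SM -> est SM e = estimate S1 e + estimate S2 e.
Proof. by move=> /merged_subset eC; rewrite mSM.1 comb_estE. Qed.

Lemma two_counter_merged : two_counter SM.
Proof.
split; last by move=> e eSM; rewrite mSM.1; apply: comb_est_gt0 => //; apply: merged_subset.
- case: (leqP (size C) 2) => [/merged_small ->|/merged_large [x [y [-> xy _]]]].
    exact: comb_items_uniq.
  by rewrite /= inE xy.
- case: (leqP (size C) 2) => [le2|/merged_large [x [y [-> _ _]]] //].
  by rewrite merged_small.
Qed.

Lemma ssum_merged : ssum SM = ssum S1 + ssum S2.
Proof.
case: (leqP (size C) 2) => [le2|gt2].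
  rewrite /ssum (eq_big_seq _ est_merged) merged_small // big_split.
  rewrite !sum_estimate ?comb_items_uniq //.
    exact: sub_comb_itemsr.
  exact: sub_comb_itemsl.
have [x [y [SMxy xy top]]] := merged_large gt2.
have xSM : x \in items SM by rewrite SMxy mem_head.
have ySM : y \in items SM by rewrite SMxy mem_seq2 eqxx orbT.
rewrite {1}/ssum SMxy !big_cons big_nil addr0 !est_merged //.
have pair1 := estimate_pair_le_ssum tc1 xy; have pair2 := estimate_pair_le_ssum tc2 xy.
have [u [v [uv uC vC tight1 tight2]]] := exists_tight_pair tc1 tc2 (ltnW gt2).
rewrite SMxy in top; have := le_top_pair (F := comb_est S1 S2) uv uC vC top.
by rewrite !comb_estE ?(merged_subset xSM) ?(merged_subset ySM) //; lra.
Qed.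

Lemma fminD_le_merged : fmin S1 + fmin S2 <= fmin SM.
Proof.
have [_ le2 _] := two_counter_merged.
apply: le_fmin => // [e eSM|small]; first by rewrite est_merged // lerD ?fmin_le_estimate.
have leC2 : (size C <= 2)%N.
  by rewrite leqNgt; apply/negP => /merged_large [x [y [SMxy _ _]]]; rewrite SMxy in small.
rewrite merged_small // in small.
have small_sub S : two_counter S -> {subset items S <= C} -> fmin S = 0.
  by case=> uqS _ _ sub; apply/fmin_eq0/(leq_ltn_trans (uniq_leq_size uqS sub)).
by rewrite (small_sub _ tc1 (@sub_comb_itemsl S1 S2))
  (small_sub _ tc2 (@sub_comb_itemsr S1 S2)) addr0.
Qed.

Lemma estimate_notin_merged e :
  e \notin items SM -> estimate S1 e + estimate S2 e <= fmin SM.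
Proof.
move=> eSM; case: (boolP (e \in C)) => eC; last first.
  move: eC; rewrite mem_comb_items negb_or /estimate => /andP[/negbTE-> /negbTE->].
  exact: fminD_le_merged.
have gt2 : (2 < size C)%N.
  by rewrite ltnNge; apply/negP => /merged_small SMC; rewrite SMC eC in eSM.
have [x [y [SMxy _ top]]] := merged_large gt2.
rewrite -comb_estE //; apply: le_fmin; rewrite ?SMxy // => a aSM.
by rewrite mSM.1; apply: top; rewrite // SMxy.
Qed.

Lemma valid_merged t1 t2 : pos_weights t1 -> pos_weights t2 ->
  valid S1 t1 -> valid S2 t2 -> valid SM (t1 ++ t2).
Proof.
move=> pos1 pos2 v1 v2.
have freqE e : freq (t1 ++ t2) e = freq t1 e + freq t2 e by rewrite /freq big_cat.
have ssumE : ssum SM = tot (t1 ++ t2).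
  case: v1 => tot1 _ _ _; case: v2 => tot2 _ _ _.
  by rewrite ssum_merged /tot big_cat tot1 tot2.
have bounds e := conj (valid_estimate e pos1 v1) (valid_estimate e pos2 v2).
split => // [e eSM|e eSM|]; rewrite ?freqE.
- rewrite est_merged //; have := fminD_le_merged.
  by have [/andP[? ?] /andP[? ?]] := bounds e; lra.
- have := estimate_notin_merged eSM.
  by have [/andP[? ?] /andP[? ?]] := bounds e; lra.
- by rewrite -ssumE; apply: fmin_le_half two_counter_merged.
Qed.

End Merge.
End TwoCounter.

Unset Implicit Arguments.

Theorem theorem3 (U : eqType) (R : realFieldType) (d w : nat)
  (h : 'I_d -> U -> 'I_w) (sigma1 sigma2 : stream U R)
  (D1 D2 G : 'I_d -> 'I_w -> summary U R) :
  (0 < d)%N -> (0 < w)%N ->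
  pos_weights sigma1 -> pos_weights sigma2 ->
  (forall i j, two_counter (D1 i j) /\ valid (D1 i j) (substream h sigma1 i j)) ->
  (forall i j, two_counter (D2 i j) /\ valid (D2 i j) (substream h sigma2 i j)) ->
  (forall i j, merged (D1 i j) (D2 i j) (G i j)) ->
  forall i j,
    [/\ two_counter (G i j),
        valid (G i j) (substream h (sigma1 ++ sigma2) i j)
      & ssum (G i j) = tot (substream h sigma1 i j) + tot (substream h sigma2 i j)].
Proof.
move=> _ _ pos1 pos2 D1valid D2valid Gmerged i j.
have [tc1 v1] := D1valid i j; have [tc2 v2] := D2valid i j.
have mG := Gmerged i j.
split.
- exact: two_counter_merged mG.
- rewrite /substream filter_cat.
  by apply: (valid_merged tc1 tc2 mG) => //; apply: pos_weights_filter.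
- by case: v1 => <- _ _ _; case: v2 => <- _ _ _; apply: ssum_merged tc1 tc2 mG.
Qed.
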